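(* Assume CH. Let $\mathcal{I}$ and $\mathcal{J}$ be ideals such that $\mathcal{I}$ is unboring and $\mathcal{J}\not\leq_K\mathcal{I}|A$ for every $A\notin\mathcal{I}$. Then there is a Mr\'owka space in $\mathrm{FinBW}(\mathcal{I})\setminus\mathrm{FinBW}(\mathcal{J})$.
   Context: An ideal on an infinite countable set $X$ is a family $\mathcal{I}\subseteq\mathcal{P}(X)$ closed under subsets and finite unions, containing all finite subsets, with $X\notin\mathcal{I}$. $\mathcal{I}|A=\{B\cap A:B\in\mathcal{I}\}$. A space $X$ is in $\mathrm{FinBW}(\mathcal{I})$ if $X$ is Hausdorff and for every sequence $(x_n)_{n\in\bigcup\mathcal{I}}$ in $X$ there is $A\notin\mathcal{I}$ with $(x_n)_{n\in A}$ convergent in $X$. $\mathcal{J}\leq_K\mathcal{I}$: there is a function $f:\bigcup\mathcal{I}\to\bigcup\mathcal{J}$ with $f^{-1}[B]\in\mathcal{I}$ for all $B\in\mathcal{J}$ (for restrictions, with $\bigcup\mathcal{I}|A=A$). $\mathrm{Fin}^2$: ideal on $\omega^2$ of all $A$ with only finitely many $n$ such that $\{m:(n,m)\in A\}$ is infinite. $\mathcal{BI}$: ideal on $\omega^3$ of all $A$ for which there is $k$ with $\{(j,l):(i,j,l)\in A\}\in\mathrm{Fin}^2$ for $i<k$ and finite for $i\ge k$. $\mathcal{I}\sqsubseteq\mathcal{J}$: there is a bijection $f:\bigcup\mathcal{J}\to\bigcup\mathcal{I}$ with $f^{-1}[A]\in\mathcal{J}$ for all $A\in\mathcal{I}$.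 $\mathcal{I}$ is unboring if $\mathcal{BI}\not\sqsubseteq\mathcal{I}$. A Mr\'owka space is $\Phi(\mathcal{A})$ for an infinite almost disjoint family $\mathcal{A}$ of infinite subsets of $\omega$: underlying set $\omega\cup\mathcal{A}\cup\{\infty\}$, points of $\omega$ isolated, basic neighbourhoods of $A\in\mathcal{A}$ are $\{A\}\cup(A\setminus F)$ ($F\subseteq\omega$ finite), of $\infty$ are $\{\infty\}\cup(\mathcal{A}\setminus G)\cup(\omega\setminus(F\cup\bigcup G))$ ($F\subseteq\omega$, $G\subseteq\mathcal{A}$ finite). *)

From mathcomp Require Import all_boot.
From mathcomp Require Import boolp classical_sets functions cardinality.
Set Implicit Arguments. Unset Strict Implicit. Unset Printing Implicit Defensive.
Local Open Scope classical_set_scope.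

Definition CH : Prop :=
  forall S : set (set nat), countable S \/ card_eq S [set: set nat].

Definition is_ideal (X : Type) (I : set (set X)) : Prop :=
  [/\ (forall A B, A `<=` B -> I B -> I A),
      (forall A B, I A -> I B -> I (A `|` B)),
      (forall A, finite_set A -> I A) &
      ~ I [set: X]].

Definition restr (X : Type) (I : set (set X)) (A : set X) : set (set X) :=
  [set B `&` A | B in I].

(* J <=_K I|A : a function f : A -> Y (extended arbitrarily to X) with
   f^{-1}[B] (inside A) in I|A for every B in J. *)
Definition katetov_le_restr (Y X : Type) (J : set (set Y)) (I : set (set X))
  (A : set X) : Prop :=
  exists f : X -> Y, forall B, J B -> restr I A (A `&` f @^-1` B).

Definition Fin2 : set (set (nat * nat)) :=
  [set A | finite_set [set n | infinite_set [set m | A (n, m)]]].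

Definition BI : set (set (nat * (nat * nat))) :=
  [set A | exists k : nat, forall i : nat,
     ((i < k)%N -> Fin2 [set p | A (i, p)]) /\
     ((k <= i)%N -> finite_set [set p | A (i, p)])].

Definition sqle (X Y : Type) (I : set (set X)) (J : set (set Y)) : Prop :=
  exists f : Y -> X, bijective f /\ forall A, I A -> J (f @^-1` A).

Definition unboring (X : Type) (I : set (set X)) : Prop := ~ sqle BI I.

Definition hausdorff_opens (T : Type) (op : set (set T)) : Prop :=
  forall p q : T, p <> q ->
    exists U V, [/\ op U, op V, U p, V q & U `&` V = set0].

Definition conv_on (X T : Type) (op : set (set T)) (x : X -> T) (A : set X)
  (p : T) : Prop :=
  forall U, op U -> U p -> finite_set [set n | A n /\ ~ U (x n)].

Definition FinBW (X T : Type) (I : set (set X)) (op : set (set T)) : Prop :=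
  hausdorff_opens op /\
  forall x : X -> T, exists A, ~ I A /\ exists p, conv_on op x A p.

Definition AD_family (AD : set (set nat)) : Prop :=
  [/\ infinite_set AD,
      (forall B, AD B -> infinite_set B) &
      (forall B C, AD B -> AD C -> B <> C -> finite_set (B `&` C))].

(* Points of the Mrowka space Phi(AD): omega, AD, and infinity *)
Inductive mpt (AD : set (set nat)) : Type :=
| MN of nat
| MA (B : set nat) of AD B
| MInf.
Arguments MN {AD}.
Arguments MInf {AD}.

Definition mbasic (AD : set (set nat)) (p : mpt AD) : set (set (mpt AD)) :=
  match p with
  | MN n => [set [set q | q = MN n]]
  | MA B _ => [set U | exists F : set nat, finite_set F /\
       U = (fun q => match q with
                     | MN m => B m /\ ~ F m
                     | MA C _ => C = B
                     | MInf => False end)]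
  | MInf => [set U | exists (F : set nat) (G : set (set nat)),
       [/\ finite_set F, finite_set G, G `<=` AD &
       U = (fun q => match q with
                     | MN m => ~ F m /\ ~ (exists C, G C /\ C m)
                     | MA C _ => ~ G C
                     | MInf => True end)]]
  end.

Definition mopen (AD : set (set nat)) : set (set (mpt AD)) :=
  [set U | forall p, U p -> exists V, mbasic p V /\ V `<=` U].

(* Under CH the tasks (a sequence in Phi(AD), described by a code X -> nat + nat, or a
   subset of omega) can be listed along a well-order whose initial segments are
   countable, and the almost disjoint family is built along it by recursion, every stage
   seeing only countably many earlier sets c_0, c_1, ....  For a sequence, unboringness
   of I yields an I-positive subsequence that is constant, converges to some c_k,
   converges to infinity, or lies in omega with range almost disjoint from every c_k; in
   the last case the Katetov hypothesis shrinks it so that its range is J-small, and that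
   range becomes the new member.  The dichotomy holds because when all four alternatives
   fail, grouping the fibers of the sequence by the first c_k that contains them exhibits
   a copy of BI inside I.  For a set B almost disjoint from all c_k with J-positive
   preimage under the injection e : Y -> omega, the Katetov hypothesis again provides an
   infinite subset with J-small preimage, which becomes the new member.  So every set
   with J-positive preimage meets some member infinitely often, and therefore the
   sequence e has no J-positive convergent subsequence. *)

From mathcomp Require Import all_boot.
From mathcomp Require Import boolp classical_sets functions cardinality wochoice.
From Stdlib Require Import Inverse_Image.
Local Open Scope classical_set_scope.
Set Implicit Arguments. Unset Strict Implicit. Unset Printing Implicit Defensive.

(** * Ideals, finite-to-one maps and ranks *)

Definition choose_or {T} (d : T) (P : T -> Prop) : T :=
  if pselect (exists x, P x) is left h then projT1 (cid h) else d.

Lemma choose_orP T (d : T) (P : T -> Prop) : (exists x, P x) -> P (choose_or d P).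
Proof. by rewrite /choose_or; case: pselect => // h _; exact: projT2 (cid h). Qed.

Lemma choose_or_cases T (d : T) (P : T -> Prop) :
  P (choose_or d P) \/ choose_or d P = d.
Proof.
by rewrite /choose_or; case: pselect => h; [left; exact: projT2 (cid h) | right].
Qed.

Lemma choose_or_default T (d d' : T) (P : T -> Prop) :
  (exists x, P x) -> choose_or d P = choose_or d' P.
Proof. by rewrite /choose_or; case: pselect. Qed.

Lemma cancel_of_injective T U (f : T -> U) (t0 : T) :
  injective f -> exists g, cancel f g.
Proof.
move=> f_inj; exists (fun u => choose_or t0 (fun t => f t = u)) => t.
by apply: f_inj; apply: (choose_orP t0 (ex_intro (fun s => f s = f t) t erefl)).
Qed.

Lemma countable_setT_inj T : countable [set: T] -> exists f : T -> nat, injective f.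
Proof.
by move=> /countable_injP[f f_inj]; exists f => s t; apply: f_inj; rewrite in_setT.
Qed.

Definition finite_to_one {T U} (f : T -> U) (A : set T) :=
  forall u, finite_set [set t | A t /\ f t = u].

Lemma finite_to_oneS T U (f : T -> U) (A B : set T) :
  A `<=` B -> finite_to_one f B -> finite_to_one f A.
Proof. by move=> AB fB u; apply: sub_finite_set (fB u) => t [/AB]. Qed.

Lemma finite_to_one_comp T U V (f : T -> U) (g : U -> V) (A : set T) :
  finite_to_one (g \o f) A -> finite_to_one f A.
Proof.
by move=> fA u; apply: sub_finite_set (fA (g u)) => t [At <-].
Qed.

Lemma finite_nat_bounded (A : set nat) : finite_set A -> exists N, forall n, A n -> n < N.
Proof.
move=> /finite_seqP[s ->]; exists (\max_(x <- s) x).+1 => n /= ns.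
by rewrite ltnS; apply: leq_bigmax_seq.
Qed.

Lemma infinite_nat_unbounded (S : set nat) :
  infinite_set S -> forall n, exists2 m, n <= m & S m.
Proof.
move=> iS n; apply: contra_notP iS => h; apply: (sub_finite_set _ (finite_II n)) => m Sm.
by rewrite /= ltnNge; apply/negP => le; apply: h; exists m.
Qed.

Lemma infinite_image_inj T U (f : T -> U) (A : set T) :
  injective f -> infinite_set A -> infinite_set (f @` A).
Proof.
move=> f_inj iA fA; apply: iA; apply: sub_finite_set (finite_preimage (in2W f_inj) fA).
by move=> t At; exists t.
Qed.

Fixpoint rank (S : set nat) (n : nat) : nat :=
  if n is n'.+1 then rank S n' + `[< S n' >] else 0.

Lemma rank_mono S : {homo rank S : m n / m <= n}.
Proof.
move=> m n; elim: n => [|n IH]; first by rewrite leqn0 => /eqP ->.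
rewrite leq_eqVlt => /orP[/eqP ->//|]; rewrite ltnS => /IH le_mn /=.
exact: leq_trans le_mn (leq_addr _ _).
Qed.

Lemma rank_lt S m n : S m -> m < n -> rank S m < rank S n.
Proof.
move=> Sm lt_mn; apply: (@leq_trans (rank S m.+1)); last exact: rank_mono.
by rewrite /= (asboolT Sm) addn1.
Qed.

Lemma rank_leq_inv S m n : S m -> rank S n <= rank S m -> n <= m.
Proof. by move=> Sm; apply: contraTT; rewrite -!ltnNge; apply: rank_lt. Qed.

Lemma rank_inj S m n : S m -> S n -> rank S m = rank S n -> m = n.
Proof.
by move=> Sm Sn e; apply/eqP; rewrite eqn_leq (rank_leq_inv Sn) ?e // (rank_leq_inv Sm) ?e.
Qed.

Lemma rank_surj S : infinite_set S -> forall j, exists2 m, S m & rank S m = j.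
Proof.
move=> iS j.
have ex : exists n, j < rank S n.
  elim: j => [|j [n lt_jn]].
    have [m _ Sm] := infinite_nat_unbounded iS 0.
    by exists m.+1; rewrite /= (asboolT Sm) addn1.
  have [m le_nm Sm] := infinite_nat_unbounded iS n.
  exists m.+1; rewrite /= (asboolT Sm) addn1 ltnS.
  exact: leq_trans lt_jn (rank_mono S le_nm).
have [[|n] //= lt_j min_n] := ex_minnP ex.
have le_rank : rank S n <= j by rewrite leqNgt; apply/negP => /min_n; rewrite ltnn.
move: lt_j; case: (asboolP (S n)) => Sn; last by rewrite addn0 ltnNge le_rank.
by rewrite addn1 ltnS => le_j; exists n => //; apply/eqP; rewrite eqn_leq le_rank.
Qed.

Section Ideals.
Variables (X : Type) (I : set (set X)).
Hypothesis hI : is_ideal I.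

Lemma idealS A B : A `<=` B -> I B -> I A.
Proof. by case: hI => h _ _ _; apply: h. Qed.

Lemma idealU A B : I A -> I B -> I (A `|` B).
Proof. by case: hI => _ h _ _; apply: h. Qed.

Lemma ideal_finite A : finite_set A -> I A.
Proof. by case: hI => _ _ h _; apply: h. Qed.

Lemma ideal_setT : ~ I [set: X].
Proof. by case: hI. Qed.

Lemma ideal_subU A B C : A `<=` B `|` C -> I B -> I C -> I A.
Proof. by move=> sub IB IC; apply: idealS sub (idealU IB IC). Qed.

Lemma ideal_empty A : (forall x, ~ A x) -> I A.
Proof. by move=> A0; apply: ideal_finite; apply: sub_finite_set (finite_set0 X). Qed.

Lemma ideal_positive_infinite A : ~ I A -> infinite_set A.
Proof. by move=> nA fA; apply: nA; apply: ideal_finite. Qed.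

Lemma ideal_positive_nonempty A : ~ I A -> exists x, A x.
Proof. by move/ideal_positive_infinite/infinite_setN0. Qed.

Lemma ideal_bigcup K (D : set K) (F : K -> set X) :
  finite_set D -> (forall k, D k -> I (F k)) -> I (\bigcup_(k in D) F k).
Proof.
elim/Pchoice: K => K in D F *; move=> /finite_seqP[s ->].
elim: s => [|k s IH] IF; first by apply: ideal_empty => x [].
apply: (ideal_subU (B := F k) (C := \bigcup_(k in [set` s]) F k)).
- by move=> x [k']; rewrite /= in_cons => /orP[/eqP -> | sk'] Fx; [left | right; exists k'].
- by apply: IF; rewrite /= mem_head.
- by apply: IH => k' sk'; apply: IF; rewrite /= in_cons sk' orbT.
Qed.

Lemma ideal_fibers_inj Z W (u : X -> Z) (f : Z -> W) :
  injective f -> (forall z, I [set x | u x = z]) ->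
  forall w, I [set x | f (u x) = w].
Proof.
move=> f_inj u_small w.
case: (pselect (exists x0, f (u x0) = w)) => [[x0 <-] | none].
  by apply: (idealS _ (u_small (u x0))) => x /f_inj.
by apply: ideal_empty => x fx; apply: none; exists x.
Qed.

End Ideals.

(** * Copies of BI *)

Lemma bijective_of_inj_surj T U (f : T -> U) :
  injective f -> (forall u, exists t, f t = u) -> bijective f.
Proof.
move=> f_inj f_surj; rewrite -setTT_bijective; split=> [//|x y _ _|u _].
  exact: f_inj.
by have [t <-] := f_surj u; exists t.
Qed.

Section BlockPartition.
Variables (X : Type) (I : set (set X)) (iota : X -> nat) (c b : X -> nat).
Hypotheses (hI : is_ideal I) (iota_inj : injective iota).
Hypothesis block_infinite : forall i j, infinite_set [set x | c x = i /\ b x = j].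
Hypothesis block_small : forall i j, I [set x | c x = i /\ b x = j].
Hypothesis column_small :
  forall i A, (forall x, A x -> c x = i) -> finite_to_one b A -> I A.
Hypothesis spread_small : forall A, finite_to_one c A -> I A.

Let block_image i j := iota @` [set x | c x = i /\ b x = j].

Definition block_coord x : nat * (nat * nat) :=
  (c x, (b x, rank (block_image (c x) (b x)) (iota x))).

Lemma block_coord_inj : injective block_coord.
Proof.
move=> x y [ci bi]; rewrite ci bi => ri; apply: iota_inj.
by apply: rank_inj ri; [exists x | exists y].
Qed.

Lemma block_coord_surj p : exists x, block_coord x = p.
Proof.
case: p => i [j l].
have [_ [x [cx bx] <-] rl] := rank_surj (infinite_image_inj iota_inj (@block_infinite i j)) l.
by exists x; rewrite /block_coord cx bx rl.
Qed.

Lemma block_coord_finite (S : set (nat * (nat * nat))) :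
  finite_set S -> finite_set (block_coord @^-1` S).
Proof. exact: finite_preimage (in2W block_coord_inj). Qed.

Lemma column_Fin2_small i S :
  Fin2 S -> I [set x | c x = i /\ S (block_coord x).2].
Proof.
move=> /finite_nat_bounded[N infinite_rows].
apply: (ideal_subU hI (B := \bigcup_(j in `I_N) [set x | c x = i /\ b x = j])
                      (C := [set x | (c x = i /\ S (block_coord x).2) /\ N <= b x])).
- move=> x Px; case: (ltnP (b x) N) => bx; [left; exists (b x) | right] => //.
  by case: Px.
- by apply: (ideal_bigcup hI) => [|j _]; [exact: finite_II | exact: block_small].
- apply: (@column_small i) => [x [[]]//|j].
  case: (ltnP j N) => jN.
    by apply: sub_finite_set (finite_set0 X) => x [[_ Nb] bj]; move: Nb; rewrite bj leqNgt jN.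
  have row_j : finite_set [set l | S (j, l)].
    by apply: contrapT => /infinite_rows; rewrite ltnNge jN.
  apply: sub_finite_set (block_coord_finite (finite_image (fun l => (i, (j, l))) row_j)).
  move=> x [[[ci Sx] _] bj].
  by exists (block_coord x).2.2; [move: Sx | ]; rewrite /block_coord ci bj.
Qed.

Lemma boring_of_blocks : sqle BI I.
Proof.
exists block_coord; split.
  by apply: bijective_of_inj_surj block_coord_inj block_coord_surj.
move=> B [k Bk].
apply: (ideal_subU hI
  (B := \bigcup_(i in `I_k) [set x | c x = i /\ [set p | B (i, p)] (block_coord x).2])
  (C := [set x | k <= c x /\ B (block_coord x)])).
- move=> x Bx; case: (ltnP (c x) k) => ck; last by right.
  by left; exists (c x) => //; split=> //; rewrite /block_coord in Bx *.
- apply: (ideal_bigcup hI) => [|i /= ik]; first exact: finite_II.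
  exact: (@column_Fin2_small i [set p | B (i, p)] ((Bk i).1 ik)).
- apply: spread_small => i; case: (ltnP i k) => ik.
    by apply: sub_finite_set (finite_set0 X) => x [[kc _] ci]; move: kc; rewrite ci leqNgt ik.
  apply: sub_finite_set (block_coord_finite (finite_image (pair i) ((Bk i).2 ik))).
  by move=> x [[_ Bx] ci]; exists (block_coord x).2; rewrite /block_coord ci in Bx *.
Qed.

End BlockPartition.

Lemma nat_pairing : exists f : nat * nat -> nat, bijective f.
Proof. by have /pcard_eqP/bijPex[f] := card_nat2; rewrite setTT_bijective; exists f. Qed.

Section Atoms.
Variables (X : Type) (I : set (set X)) (iota : X -> nat) (a : X -> nat).
Hypotheses (hI : is_ideal I) (iota_inj : injective iota).
Hypothesis atom_small : forall n, I [set x | a x = n].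
Hypothesis spread_small : forall A, finite_to_one a A -> I A.

Let big := [set n | infinite_set [set x | a x = n]].

Lemma finite_atoms_small : I [set x | ~ big (a x)].
Proof.
apply: spread_small => n; case: (pselect (big n)) => [bn | /contrapT fin_n].
  by apply: sub_finite_set (finite_set0 X) => x [nb an]; apply: nb; rewrite an.
by apply: sub_finite_set fin_n => x [].
Qed.

Lemma infinitely_many_big_atoms : infinite_set big.
Proof.
move=> /finite_nat_bounded[N bigN]; apply: (ideal_setT hI).
apply: (ideal_subU hI (B := \bigcup_(n in `I_N) [set x | a x = n])
                      (C := [set x | ~ big (a x)])); last exact: finite_atoms_small.
- move=> x _; case: (pselect (big (a x))) => bx; last by right.
  by left; exists (a x); first exact: bigN.
- by apply: (ideal_bigcup hI) => [|n _]; [exact: finite_II | exact: atom_small].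
Qed.

Lemma boring_of_atoms : sqle BI I.
Proof.
have [f [g fK gK]] := nat_pairing.
pose label x := if `[< big (a x) >] then g (rank big (a x)) else (0, 0).
have big_label x : big (a x) -> label x = g (rank big (a x)).
  by move=> bx; rewrite /label (asboolT bx).
have atom_of p : exists2 m, big m & rank big m = f p.
  exact: rank_surj infinitely_many_big_atoms (f p).
have label_small A : finite_to_one label A -> I A.
  move=> fA; apply: spread_small => n; case: (pselect (big n)) => [bn | /contrapT fin_n].
    apply: sub_finite_set (fA (g (rank big n))) => x [Ax an].
    by split=> //; rewrite big_label an.
  by apply: sub_finite_set fin_n => x [].
apply: (boring_of_blocks (c := fun x => (label x).1) (b := fun x => (label x).2) hI iota_inj).
- move=> i j; have [m bm rm] := atom_of (i, j); apply: (sub_infinite_set _ bm) => x /= am.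
  by rewrite big_label am ?rm ?fK.
- move=> i j; have [m bm rm] := atom_of (i, j).
  apply: (ideal_subU hI (B := [set x | a x = m]) (C := [set x | ~ big (a x)])) => //;
    last exact: finite_atoms_small.
  move=> x [ci bj]; case: (pselect (big (a x))) => bx; [left | by right].
  have lx : label x = (i, j) by rewrite [label x]surjective_pairing ci bj.
  by apply: (rank_inj bx bm); rewrite rm -lx big_label // gK.
- by move=> k B _ /(@finite_to_one_comp _ _ _ label snd); apply: label_small.
- by move=> B /(@finite_to_one_comp _ _ _ label fst); apply: label_small.
Qed.

End Atoms.

Section Groups.
Variables (X : Type) (I : set (set X)) (iota : X -> nat) (v : X -> nat) (grp : nat -> nat).
Hypotheses (hI : is_ideal I) (iota_inj : injective iota).
Hypothesis fiber_small : forall m, I [set x | v x = m].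
Hypothesis group_small :
  forall A k, finite_to_one v A -> (forall x, A x -> grp (v x) = k) -> I A.
Hypothesis spread_small :
  forall A, finite_to_one v A -> finite_to_one (grp \o v) A -> I A.

Let big m := infinite_set [set x | v x = m].
Let members k := [set m | big m /\ grp m = k].
Let rich k := infinite_set (members k).

Lemma small_fibers_small k : I [set x | grp (v x) = k /\ ~ big (v x)].
Proof.
apply: (@group_small _ k) => [m|x []//].
case: (pselect (big m)) => [bm | /contrapT fin_m].
  by apply: sub_finite_set (finite_set0 X) => x [[_ nb] vm]; apply: nb; rewrite vm.
by apply: sub_finite_set fin_m => x [].
Qed.

Lemma poor_group_small k : ~ rich k -> I [set x | grp (v x) = k].
Proof.
move=> /contrapT /finite_nat_bounded[N bigN].
apply: (ideal_subU hI (B := \bigcup_(m in `I_N) [set x | v x = m])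
                      (C := [set x | grp (v x) = k /\ ~ big (v x)])).
- move=> x gx; case: (pselect (big (v x))) => bx; last by right.
  by left; exists (v x) => //; apply: bigN.
- by apply: (ideal_bigcup hI) => [|m _]; [exact: finite_II | exact: fiber_small].
- exact: small_fibers_small.
Qed.

Section ManyRich.
Hypothesis rich_infinite : infinite_set rich.

Let good x := rich (grp (v x)) /\ big (v x).
Let col x := rank rich (grp (v x)).
Let row x := if `[< good x >] then rank (members (grp (v x))) (v x) else 0.

Lemma rich_of_rank i : exists2 k, rich k & rank rich k = i.
Proof. exact: rank_surj rich_infinite i. Qed.

Lemma col_inj x k : rich k -> rich (grp (v x)) -> col x = rank rich k -> grp (v x) = k.
Proof. by move=> rk rx; apply: rank_inj. Qed.

Lemma rich_block_infinite i j : infinite_set [set x | col x = i /\ row x = j].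
Proof.
have [k rk <-] := rich_of_rank i; have [m [bm gm] <-] := rank_surj rk j.
apply: (sub_infinite_set _ bm) => x /= vx.
have gx : good x by rewrite /good vx gm.
by rewrite /col /row (asboolT gx) vx gm.
Qed.

Lemma rich_block_small i j : I [set x | col x = i /\ row x = j].
Proof.
have [k rk rki] := rich_of_rank i; have [m [bm gm] rmj] := rank_surj rk j.
apply: (ideal_subU hI (B := [set x | v x = m])
  (C := [set x | grp (v x) = k /\ ~ big (v x)] `|`
        \bigcup_(k' in `I_k.+1) [set x | ~ rich k' /\ grp (v x) = k'])).
- move=> x [cx bx]; case: (pselect (good x)) => [gx | ngx].
    have gxk : grp (v x) = k by apply: (col_inj rk gx.1); rewrite cx.
    left; apply: (@rank_inj (members k)) => //; first by split; [case: gx |].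
    by rewrite rmj -bx /row (asboolT gx) gxk.
  right; case: (pselect (rich (grp (v x)))) => rx.
    left; split; first by apply: (col_inj rk rx); rewrite cx.
    by move=> bigx; apply: ngx.
  right; exists (grp (v x)) => //; rewrite /= ltnS.
  by apply: (rank_leq_inv rk); rewrite rki -cx.
- exact: fiber_small.
- apply: (idealU hI); first exact: small_fibers_small.
  apply: (ideal_bigcup hI) => [|k' _]; first exact: finite_II.
  case: (pselect (rich k')) => rk'; first by apply: (ideal_empty hI) => x [].
  by apply: (idealS hI _ (poor_group_small rk')) => x [].
Qed.

Lemma rich_column_small i A :
  (forall x, A x -> col x = i) -> finite_to_one row A -> I A.
Proof.
move=> Ai fA; have [k rk rki] := rich_of_rank i.
apply: (ideal_subU hI (B := [set x | A x /\ row x = 0]) (C := [set x | A x /\ good x])).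
- move=> x Ax; case: (pselect (good x)) => gx; [by right | left].
  by split=> //; rewrite /row (asboolF gx).
- exact: ideal_finite (fA 0).
- apply: (@group_small _ k) => [m | x [Ax [rx _]]].
    apply: sub_finite_set (fA (rank (members (grp m)) m)) => x [[Ax gx] vm].
    by split=> //; rewrite /row (asboolT gx) vm.
  by apply: (col_inj rk rx); rewrite (Ai x Ax) rki.
Qed.

Lemma boring_of_many_rich : sqle BI I.
Proof.
apply: (boring_of_blocks (c := col) (b := row) hI iota_inj).
- exact: rich_block_infinite.
- exact: rich_block_small.
- exact: rich_column_small.
- move=> A fA; apply: spread_small => [m | k].
    by apply: sub_finite_set (fA (rank rich (grp m))) => x [Ax vm]; split; rewrite // /col vm.
  by apply: sub_finite_set (fA (rank rich k)) => x [Ax /= gx]; split; rewrite // /col gx.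
Qed.

End ManyRich.

Lemma boring_of_few_rich : finite_set rich -> sqle BI I.
Proof.
move=> /finite_nat_bounded[N richN].
pose code m : nat + nat := if `[< rich (grp m) /\ big m >] then inl m else inr (grp m).
have code_small z : I [set x | code (v x) = z].
  case: z => [m | k].
    by apply: (idealS hI _ (fiber_small m)) => x /=; rewrite /code; case: ifP => // _ [->].
  apply: (ideal_subU hI (B := [set x | grp (v x) = k /\ ~ big (v x)])
                        (C := [set x | ~ rich k /\ grp (v x) = k])).
  - move=> x /=; rewrite /code; case: ifP => // /asboolPn ngood [gx].
    case: (pselect (big (v x))) => bx; [right | by left].
    by split=> // rk; apply: ngood; rewrite gx.
  - exact: small_fibers_small.
  - case: (pselect (rich k)) => rk; first by apply: (ideal_empty hI) => x [].
    by apply: (idealS hI _ (poor_group_small rk)) => x [].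
apply: (boring_of_atoms (a := fun x => pickle (code (v x))) hI iota_inj).
  exact: (ideal_fibers_inj hI (pcan_inj pickleK) code_small).
move=> A /(@finite_to_one_comp _ _ _ (code \o v) pickle) fA.
have fvA : finite_to_one v A by apply: (@finite_to_one_comp _ _ _ v code).
apply: (ideal_subU hI (B := [set x | A x /\ ~ rich (grp (v x))])
                      (C := \bigcup_(k in `I_N) [set x | A x /\ grp (v x) = k])).
- move=> x Ax; case: (pselect (rich (grp (v x)))) => rx; last by left.
  by right; exists (grp (v x)) => //; apply: richN.
- apply: spread_small => [|k]; first by apply: (finite_to_oneS _ fvA) => x [].
  apply: sub_finite_set (fA (inr k)) => x [[Ax rx] /= gx]; split=> //.
  by rewrite /= /code; case: ifP => [/asboolP[/rx[]] | _]; rewrite gx.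
- apply: (ideal_bigcup hI) => [|k _]; first exact: finite_II.
  by apply: (@group_small _ k) => [|x []//]; apply: (finite_to_oneS _ fvA) => x [].
Qed.

Lemma boring_of_groups : sqle BI I.
Proof.
case: (pselect (finite_set rich)); first exact: boring_of_few_rich.
by move=> /boring_of_many_rich.
Qed.

End Groups.

(** * The dichotomy for unboring ideals *)

Definition least (P : set nat) : nat :=
  choose_or 0 (fun k => P k /\ forall k', P k' -> k <= k').

Lemma leastP (P : set nat) : (exists k, P k) -> P (least P) /\ forall k, P k -> least P <= k.
Proof.
move=> [k Pk]; apply: (choose_orP 0 (P := fun k => P k /\ forall k', P k' -> k <= k')).
have [|m Pm min_m] := @ex_minnP [pred k | `[< P k >]]; first by exists k; apply/asboolP.
by exists m; split=> [|k' Pk']; [apply/asboolP | apply/min_m/asboolP].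
Qed.

Definition img_inl X (h : X -> nat + nat) (A : set X) : set nat :=
  [set m | exists2 x, A x & h x = inl m].

Definition fresh X Y (I : set (set X)) (J : set (set Y)) (e : Y -> nat)
    (c : nat -> set nat) (h : X -> nat + nat) (A : set X) :=
  [/\ ~ I A, (forall x, A x -> exists m, h x = inl m), finite_to_one h A,
      J (e @^-1` img_inl h A) & forall k, finite_set (img_inl h A `&` c k)].

Lemma fresh_img_infinite X Y (I : set (set X)) (J : set (set Y)) e c h A :
  is_ideal I -> fresh I J e c h A -> infinite_set (img_inl h A).
Proof.
move=> hI [nIA A_inl fA _ _] fin_img; apply: (ideal_positive_infinite hI nIA).
have : finite_set (\bigcup_(m in img_inl h A) [set x | A x /\ h x = inl m]).
  exact: bigcup_finite.
by apply: sub_finite_set => x Ax; have [m hx] := A_inl x Ax; exists m => //; exists x.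
Qed.


Section Dichotomy.
Variables (X Y : Type) (I : set (set X)) (J : set (set Y)).
Variables (iota : X -> nat) (e : Y -> nat) (g : nat -> Y).
Variables (c : nat -> set nat) (h : X -> nat + nat).
Hypotheses (hI : is_ideal I) (hJ : is_ideal J) (iota_inj : injective iota) (eK : cancel e g).
Hypothesis not_katetov : forall A, ~ I A -> ~ katetov_le_restr J I A.

Lemma exists_fresh A : ~ I A -> (forall x, A x -> exists m, h x = inl m) ->
  finite_to_one h A -> (forall k, finite_set (img_inl h A `&` c k)) ->
  exists A', fresh I J e c h A'.
Proof.
move=> nIA A_inl fA disjA.
(* Shrink A to an I-positive set on which x |-> g (h x) lands in a member of J. *)
pose f x := g (if h x is inl m then m else 0).
have [B JB nB] : exists2 B, J B & ~ restr I A (A `&` f @^-1` B).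
  apply: contrapT => none; apply: (not_katetov nIA); exists f => B JB.
  by apply: contrapT => nB; apply: none; exists B.
exists (A `&` f @^-1` B); split.
- by move=> IA'; apply: nB; exists (A `&` f @^-1` B) => //; rewrite setIC setIA setIid.
- by move=> x [/A_inl].
- by apply: finite_to_oneS fA => x [].
- apply: (idealS hJ _ JB) => y [x [Ax fx] hx].
  by move: fx; rewrite /= /f hx eK.
- move=> k; apply: sub_finite_set (disjA k) => m [[x [Ax _] hx] ckm].
  by split=> //; exists x.
Qed.

Section NoConvergentSubsequence.
Hypothesis fiber_small : forall z, I [set x | h x = z].
Hypothesis trace_small : forall k A, finite_to_one h A ->
  (forall x, A x -> exists2 m, h x = inl m & c k m) -> I A.
Hypothesis no_fresh : forall A, ~ fresh I J e c h A.
Hypothesis remote_small : forall A, finite_to_one h A ->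
  (forall x, A x -> exists k, h x = inr k) -> I A.

Let kind (z : nat + nat) : nat :=
  if z is inl m then
    if `[< exists k, c k m >] then (least (c^~ m)).+2 else 1
  else 0.
Let v x := pickle (h x).
Let grp n := if pickle_inv n is Some z then kind z else 0.

Lemma grp_v x : grp (v x) = kind (h x).
Proof. by rewrite /grp /v pickleK_inv. Qed.

Lemma finite_to_one_v A : finite_to_one v A -> finite_to_one h A.
Proof. exact: (@finite_to_one_comp _ _ _ h pickle). Qed.

Lemma kind_group_small A k : finite_to_one v A ->
  (forall x, A x -> grp (v x) = k) -> I A.
Proof.
move=> /finite_to_one_v fA; case: k => [|[|k]] Ak.
- apply: remote_small => // x /Ak; rewrite grp_v /kind.
  by case: (h x) => [m|k]; [case: ifP | exists k].
- apply: contrapT => nIA.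
  have A_inl x : A x -> exists m, h x = inl m.
    by move=> /Ak; rewrite grp_v /kind; case: (h x) => [m|//]; exists m.
  have disj k : finite_set (img_inl h A `&` c k).
    apply: sub_finite_set (finite_set0 nat) => m [[x Ax hx] ckm].
    by move: (Ak x Ax); rewrite grp_v hx /kind (asboolT (ex_intro (c^~ m) k ckm)).
  by have [A' /no_fresh] := exists_fresh nIA A_inl fA disj.
- apply: (@trace_small k A fA) => x /Ak; rewrite grp_v /kind; case: (h x) => [m|//].
  case: (pselect (exists k, c k m)) => [hit | /asboolF ->//].
  by rewrite (asboolT hit) => -[<-]; exists m => //; case: (leastP hit).
Qed.

Lemma kind_spread_small A : finite_to_one v A ->
  finite_to_one (grp \o v) A -> I A.
Proof.
move=> /[dup] fvA /finite_to_one_v fA fkA.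
apply: (ideal_subU hI (B := [set x | A x /\ exists k, h x = inr k])
                      (C := [set x | A x /\ exists m, h x = inl m])).
- move=> x Ax; case hx: (h x) => [m|k]; [right | left]; split=> //.
    by exists m.
  by exists k.
- apply: (ideal_finite hI); apply: sub_finite_set (fkA 0) => x [Ax [k hk]].
  by split=> //=; rewrite grp_v hk.
- apply: contrapT => nIC; pose val x := if h x is inl m then m else 0.
  have disj k : finite_set (img_inl h [set x | A x /\ exists m, h x = inl m] `&` c k).
    have fin : finite_set (\bigcup_(j in `I_k.+3) [set x | A x /\ (grp \o v) x = j]).
      by apply: bigcup_finite => [|j _]; [exact: finite_II | exact: fkA].
    apply: sub_finite_set (finite_image val fin) => m [[x [Ax _] hx] ckm].
    have hit : exists k, c k m by exists k.
    exists x; last by rewrite /val hx.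
    exists (kind (h x)); last by split=> //=; rewrite grp_v.
    by rewrite /= hx /kind (asboolT hit) !ltnS; case: (leastP hit) => _; apply.
  have fC : finite_to_one h [set x | A x /\ exists m, h x = inl m].
    by apply: (finite_to_oneS _ fA) => x [].
  by have [A' /no_fresh] := exists_fresh nIC (fun x => @proj2 _ _) fC disj.
Qed.

Lemma boring_of_no_convergent_subsequence : sqle BI I.
Proof.
apply: (boring_of_groups (v := v) (grp := grp) hI iota_inj).
- exact: (ideal_fibers_inj hI (pcan_inj pickleK) fiber_small).
- exact: kind_group_small.
- exact: kind_spread_small.
Qed.

End NoConvergentSubsequence.

Lemma unboring_dichotomy : unboring I ->
  [\/ exists z, ~ I [set x | h x = z],
       exists k A, [/\ ~ I A, finite_to_one h A &
                       forall x, A x -> exists2 m, h x = inl m & c k m],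
       exists A, fresh I J e c h A |
       exists A, [/\ ~ I A, finite_to_one h A &
                     forall x, A x -> exists k, h x = inr k]].
Proof.
move=> unb; apply: contrapT => none; apply: unb.
apply: boring_of_no_convergent_subsequence.
- by move=> z; apply: contrapT => nI; apply: none; apply: Or41; exists z.
- move=> k A fA Ak; apply: contrapT => nI; apply: none; apply: Or42.
  by exists k, A.
- by move=> A fresh_A; apply: none; apply: Or43; exists A.
- move=> A fA Ak; apply: contrapT => nI; apply: none; apply: Or44.
  by exists A.
Qed.

End Dichotomy.

(** * Well orders with countable initial segments *)

Lemma exists_minimal T (lt : T -> T -> Prop) (P : T -> Prop) :
  well_founded lt -> (exists x, P x) -> exists2 z, P z & forall y, lt y z -> ~ P y.
Proof.
move=> lt_wf [x Px]; apply: contrapT => none.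
elim/(well_founded_ind lt_wf): x Px => x IH Px.
by apply: none; exists x => // y /IH.
Qed.

Lemma exists_wf_total (T : eqType) : exists lt : T -> T -> Prop,
  well_founded lt /\ forall x y, [\/ x = y, lt x y | lt y x].
Proof.
have [R R_wo] := well_ordering_principle T.
have R_chain : wo_chain R predT := withinW R_wo.
have R_total := wo_chainW R_chain.
have R_anti := wo_chain_antisymmetric R_chain.
pose lt x y := R x y /\ x <> y.
exists lt; split; last first.
  move=> x y; case: (eqVneq x y) => [-> | /eqP neq]; first exact: Or31.
  have /orP[Rxy | Ryx] : R x y || R y x by apply: R_total.
    by apply: Or32.
  by apply: Or33; split=> // /esym.
move=> x; apply: contrapT => nacc.
have [|z [[/asboolP z_nacc z_min] _]] := R_wo [pred u | `[< ~ Acc lt u >]].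
  by exists x; apply/asboolP.
apply: z_nacc; constructor=> y [Ryz neq]; apply: contrapT => y_nacc.
by apply: neq; apply: R_anti => //; rewrite Ryz z_min //; apply/asboolP.
Qed.

Lemma CH_countable_segments : CH ->
  exists (lt : set nat -> set nat -> Prop) (D : set (set nat)) (f : set nat -> set nat),
  [/\ well_founded lt, forall x y, [\/ x = y, lt x y | lt y x],
      forall q, D q -> countable [set r | lt r q] & forall S, exists2 q, D q & f q = S].
Proof.
move=> ch; have [lt [lt_wf lt_total]] := exists_wf_total (set nat).
case: (pselect (exists p, ~ countable [set r | lt r p])).
- move=> /(exists_minimal lt_wf)[p0 p0_unc p0_min].
  case: (ch [set q | lt q p0]) => // /card_eqPle[_ /pcard_surjP[f f_surj]].
  exists lt, [set q | lt q p0], f; split=> // [q /p0_min /contrapT // | S].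
  by have [q] := f_surj S I; exists q.
- move=> /forallNP countable_all.
  exists lt, setT, id; split=> // [q _ | S]; first exact: contrapT (countable_all q).
  by exists S.
Qed.

Lemma CH_index (P : Type) (dec : set nat -> P) : CH -> (forall p, exists S, dec S = p) ->
  exists (T : Type) (lt : T -> T -> Prop) (s : T -> P),
  [/\ well_founded lt, forall x y, [\/ x = y, lt x y | lt y x],
      forall q, countable [set r | lt r q] & forall p, exists q, s q = p].
Proof.
move=> ch dec_surj.
have [lt [D [f [lt_wf lt_total D_countable f_surj]]]] := CH_countable_segments ch.
exists {q | D q}, (fun a b => lt (proj1_sig a) (proj1_sig b)).
exists (fun a => dec (f (proj1_sig a))); split.
- exact: wf_inverse_image.
- move=> [x Dx] [y Dy]; case: (lt_total x y) => [exy | ? | ?]; [ | exact: Or32 | exact: Or33].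
  by apply: Or31; subst y; congr exist; exact: Prop_irrelevance.
- move=> [q Dq]; have /countable_injP[g g_inj] := D_countable q Dq.
  apply/countable_injP; exists (fun a => g (proj1_sig a)) => a b /[!inE] ra rb /g_inj.
  by rewrite !inE => /(_ ra rb) eab; apply: eq_sig_hprop => // ?; exact: Prop_irrelevance.
- move=> p; have [S <-] := dec_surj p; have [q Dq <-] := f_surj S.
  by exists (exist _ q Dq).
Qed.

(** * Mrowka spaces *)

Section Mrowka.
Variable AD : set (set nat).
Implicit Types (C F : set nat) (G : set (set nat)).

Definition ad_nbhd C F : set (mpt AD) := fun q =>
  match q with MN m => C m /\ ~ F m | MA C' _ => C' = C | MInf => False end.

Definition inf_nbhd F G : set (mpt AD) := fun q =>
  match q with
  | MN m => ~ F m /\ ~ (exists C, G C /\ C m)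
  | MA C _ => ~ G C
  | MInf => True
  end.

Lemma open_point n : mopen [set @MN AD n].
Proof. by move=> p ->; exists [set MN n]; split. Qed.

Lemma open_ad_nbhd C (hC : AD C) F : finite_set F -> mopen (ad_nbhd C F).
Proof.
move=> fF [m | C' hC' |] //= Up; first by exists [set MN m]; split=> // q ->.
by subst C'; exists (ad_nbhd C F); split=> //; exists F.
Qed.

Lemma open_inf_nbhd F G : AD_family AD -> finite_set F -> finite_set G -> G `<=` AD ->
  mopen (inf_nbhd F G).
Proof.
move=> [_ _ AD_disj] fF fG GAD [m | C hC |] //= Up.
- by exists [set MN m]; split=> // q ->.
- pose F' := F `|` [set m | C m /\ exists C', G C' /\ C' m].
  have fF' : finite_set F'.
    rewrite /F' finite_setU; split=> //.
    have fU : finite_set (\bigcup_(C' in G) (C `&` C')).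
      apply: bigcup_finite => // C' GC'; apply: (AD_disj _ _ hC (GAD _ GC')).
      by move=> eCC'; apply: Up; rewrite eCC'.
    by apply: sub_finite_set fU => m [Cm [C' [GC' C'm]]]; exists C'.
  exists (ad_nbhd C F'); split; first by exists F'.
  move=> [m [Cm nF'] | C'' _ /= -> // |] //=.
  split=> [Fm | hit]; apply: nF'; rewrite /F'; first by left.
  by right; split.
- by exists (inf_nbhd F G); split=> //; exists F, G; split.
Qed.

Let separated (p q : mpt AD) :=
  exists U V, [/\ mopen U, mopen V, U p, V q & U `&` V = set0].

Lemma separated_sym p q : separated q p -> separated p q.
Proof. by move=> [U [V [oU oV Uq Vp UV]]]; exists V, U; split=> //; rewrite setIC. Qed.

Lemma separated_point_ad n C (hC : AD C) : separated (MN n) (MA hC).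
Proof.
exists [set MN n], (ad_nbhd C [set n]); split=> //; first exact: open_point.
  exact: (open_ad_nbhd hC (finite_set1 n)).
by apply/disjoints_subset => q -> [_]; apply.
Qed.

Lemma separated_ad_ad C C' (hC : AD C) (hC' : AD C') :
  finite_set (C `&` C') -> C <> C' -> separated (MA hC) (MA hC').
Proof.
move=> fCC' neC; exists (ad_nbhd C (C `&` C')), (ad_nbhd C' set0); split=> //.
- exact: (open_ad_nbhd hC fCC').
- exact: (open_ad_nbhd hC' (finite_set0 _)).
- apply/disjoints_subset => -[m [Cm nCC'] [C'm _] | D hD /= -> /neC |] //.
  exact: nCC'.
Qed.

Lemma mrowka_hausdorff : AD_family AD -> hausdorff_opens (@mopen AD).
Proof.
move=> AD_fam; have [_ _ AD_disj] := AD_fam.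
have point_inf n : separated (MN n) MInf.
  exists [set MN n], (inf_nbhd [set n] set0); split=> //; first exact: open_point.
    exact: (open_inf_nbhd AD_fam (finite_set1 n) (finite_set0 _) (sub0set _)).
  by apply/disjoints_subset => q -> [nn _]; apply: nn.
have ad_inf C (hC : AD C) : separated (MA hC) MInf.
  exists (ad_nbhd C set0), (inf_nbhd set0 [set C]); split=> //.
  - exact: (open_ad_nbhd hC (finite_set0 _)).
  - by apply: (open_inf_nbhd AD_fam (finite_set0 _) (finite_set1 C)) => D ->.
  - apply/disjoints_subset => -[m [Cm _] [_ nh] | D _ /= eDC /(_ eDC) | []] //.
    by apply: nh; exists C.
move=> [n | C hC |] [n' | C' hC' |] // neq.
- exists [set MN n], [set MN n']; split=> //; try exact: open_point.
  by apply/disjoints_subset => q -> [en]; apply: neq; rewrite en.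
- exact: separated_point_ad.
- exact: point_inf.
- exact: separated_sym (separated_point_ad _ _).
- have neC : C <> C'.
    by move=> eCC'; subst C'; apply: neq; congr MA; exact: Prop_irrelevance.
  exact: separated_ad_ad (AD_disj _ _ hC hC' neC) neC.
- exact: ad_inf.
- exact: separated_sym (point_inf _).
- exact: separated_sym (ad_inf _ _).
Qed.

Section Convergence.
Variables (X : Type) (x : X -> mpt AD).

Lemma conv_const A p : (forall n, A n -> x n = p) -> conv_on (@mopen AD) x A p.
Proof.
move=> xA U _ Up; apply: sub_finite_set (finite_set0 X) => n [An nU].
by apply: nU; rewrite xA.
Qed.

Lemma conv_ad A C (hC : AD C) :
  (forall n, A n -> exists2 m, x n = MN m & C m) ->
  (forall m, finite_set [set n | A n /\ x n = MN m]) ->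
  conv_on (@mopen AD) x A (MA hC).
Proof.
move=> xA fA U oU UC; have [V [[F [fF ->]] VU]] := oU _ UC.
have : finite_set (\bigcup_(m in F) [set n | A n /\ x n = MN m]) by exact: bigcup_finite.
apply: sub_finite_set => n [An nU]; have [m xn Cm] := xA n An.
exists m; last by split.
by apply: contrapT => nF; apply: nU; apply: VU; rewrite xn.
Qed.

Lemma conv_inf A : (forall n, A n -> forall m, x n <> MN m) ->
  (forall p, finite_set [set n | A n /\ x n = p]) ->
  conv_on (@mopen AD) x A MInf.
Proof.
move=> xA fA U oU Uinf; have [V [[F [G [fF fG GAD ->]]] VU]] := oU _ Uinf.
have : finite_set (\bigcup_(C in G) [set n | A n /\ exists hC : AD C, x n = MA hC]).
  apply: bigcup_finite => // C GC; apply: sub_finite_set (fA (MA (GAD C GC))).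
  by move=> n [An [hC xn]]; split=> //; rewrite xn; congr MA; exact: Prop_irrelevance.
apply: sub_finite_set => n [An nU]; case xn: (x n) => [m | C hC |].
- by case: (xA n An m).
- exists C; last by split=> //; exists hC.
  by apply: contrapT => nGC; apply: nU; apply: VU; rewrite xn.
- by case: nU; apply: VU; rewrite xn.
Qed.

End Convergence.

Section PointSequence.
Variables (Y : Type) (e : Y -> nat).
Let y_e : Y -> mpt AD := fun y => MN (e y).

Lemma conv_point_finite A n :
  injective e -> conv_on (@mopen AD) y_e A (MN n) -> finite_set A.
Proof.
move=> e_inj conv.
apply: (sub_finite_set (B := [set y | A y /\ ~ [set MN n] (y_e y)] `|` e @^-1` [set n])).
  by move=> y Ay; case: (eqVneq (e y) n) => [en | /eqP ne]; [right | left; split=> // -[]].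
rewrite finite_setU; split; first exact: conv _ (@open_point n) erefl.
exact: finite_preimage (in2W e_inj) (finite_set1 n).
Qed.

Lemma conv_ad_almost A C (hC : AD C) :
  conv_on (@mopen AD) y_e A (MA hC) -> finite_set [set y | A y /\ ~ C (e y)].
Proof.
move=> conv; have := conv _ (open_ad_nbhd hC (finite_set0 nat)) erefl.
by apply: sub_finite_set => y [Ay nC]; split=> // -[].
Qed.

Lemma conv_inf_almost_disjoint A C : AD_family AD -> AD C ->
  conv_on (@mopen AD) y_e A MInf -> finite_set [set y | A y /\ C (e y)].
Proof.
move=> AD_fam hC conv.
have CAD : [set C] `<=` AD by move=> D ->.
have := conv _ (open_inf_nbhd AD_fam (finite_set0 nat) (finite_set1 C) CAD) I.
by apply: sub_finite_set => y [Ay Cy]; split=> // -[_]; apply; exists C.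
Qed.

End PointSequence.

Section SequenceCode.
Variables (X : Type) (iota : X -> nat) (x : X -> mpt AD).
Hypothesis iota_inj : injective iota.

Definition seq_code n : nat + nat :=
  if x n is MN m then inl m else inr (iota (choose_or n (fun k => x k = x n))).

Lemma seq_code_inl n m : seq_code n = inl m -> x n = MN m.
Proof. by rewrite /seq_code; case: (x n) => // m' [->]. Qed.

Lemma seq_code_inr n k : seq_code n = inr k -> forall m, x n <> MN m.
Proof. by rewrite /seq_code => + m xn; rewrite xn. Qed.

Lemma seq_code_congr n n' : x n = x n' -> seq_code n = seq_code n'.
Proof.
move=> xnn'; rewrite /seq_code xnn'.
by rewrite (@choose_or_default _ n n' (fun k => x k = x n')) //; exists n'.
Qed.

Lemma seq_code_inj n n' : seq_code n = seq_code n' -> x n = x n'.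
Proof.
have rep k p : x k = p -> x (choose_or k (fun k' => x k' = p)) = p.
  by move=> xk; apply: (choose_orP k (ex_intro (fun k' => x k' = p) k xk)).
rewrite /seq_code; case En: (x n) => [m|C hC|]; case En': (x n') => [m'|C' hC'|] //=;
  try by move=> [->].
all: by move=> [/iota_inj /(congr1 x)]; rewrite rep // rep.
Qed.

Lemma conv_ad_code A C (hC : AD C) : finite_to_one seq_code A ->
  (forall n, A n -> exists2 m, seq_code n = inl m & C m) -> conv_on (@mopen AD) x A (MA hC).
Proof.
move=> fA hA; apply: conv_ad => [n /hA[m /seq_code_inl xn Cm] | m]; first by exists m.
by apply: sub_finite_set (fA (inl m)) => n [An xn]; split=> //; rewrite /seq_code xn.
Qed.

Lemma conv_inf_code A : finite_to_one seq_code A ->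
  (forall n, A n -> exists k, seq_code n = inr k) -> conv_on (@mopen AD) x A MInf.
Proof.
move=> fA hA; apply: conv_inf => [n /hA[k /seq_code_inr] // | p].
case: (pselect (exists2 n0, A n0 & x n0 = p)) => [[n0 _ <-] | none].
  apply: sub_finite_set (fA (seq_code n0)) => n [An xn].
  by split=> //; apply: seq_code_congr.
by apply: sub_finite_set (finite_set0 X) => n [An xn]; apply: none; exists n.
Qed.

End SequenceCode.

End Mrowka.

(** * The construction *)

Lemma infinite_small_subset X Y (I : set (set X)) (J : set (set Y))
    (iota : X -> nat) (e : Y -> nat) (g : nat -> Y) :
  is_ideal I -> is_ideal J -> injective iota -> cancel e g ->
  ~ katetov_le_restr J I setT ->
  forall Z, ~ J Z -> exists2 Z', Z' `<=` Z & infinite_set Z' /\ J Z'.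
Proof.
(* Otherwise J is Fin on Z, and any injection of X into Z witnesses J <=_K I. *)
move=> hI hJ iota_inj eK not_katetov Z nJZ; apply: contrapT => none.
have small_finite W : W `<=` Z -> J W -> finite_set W.
  by move=> WZ JW; apply: contrapT => iW; apply: none; exists W.
have iZ : infinite_set (e @` Z).
  exact: infinite_image_inj (can_inj eK) (ideal_positive_infinite hJ nJZ).
pose en k := choose_or 0 (fun m => (e @` Z) m /\ rank (e @` Z) m = k).
have enP k : (e @` Z) (en k) /\ rank (e @` Z) (en k) = k.
  have [m Zm rm] := rank_surj iZ k.
  exact: (choose_orP 0 (ex_intro (fun m => _ /\ _ = k) m (conj Zm rm))).
have enZ k : Z (g (en k)) by have [[y Zy <-] _] := enP k; rewrite eK.
have enK k : e (g (en k)) = en k by have [[y _ <-] _] := enP k; rewrite eK.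
have en_inj : injective (fun k => g (en k)).
  by move=> k k' /(congr1 e); rewrite !enK => ekk'; rewrite -(enP k).2 -(enP k').2 ekk'.
apply: not_katetov; exists (fun x => g (en (iota x))) => B JB.
exists ((fun x => g (en (iota x))) @^-1` B); last by rewrite setTI setIT.
apply: (ideal_finite hI); have : finite_set (B `&` Z).
  by apply: small_finite => [y [] //|]; apply: (idealS hJ _ JB) => y [].
move=> /(finite_preimage (in2W (inj_comp en_inj iota_inj))).
by apply: sub_finite_set => x Bx; split => //=; apply: enZ.
Qed.

Definition decode_task X (iota : X -> nat) (S : set nat) : (X -> nat + nat) + set nat :=
  if `[< S 0 >] then inr [set n | S n.+1]
  else inl (fun x => choose_or (inl 0) (fun z => S (pickle (iota x, z)).+1)).

Lemma decode_task_surj X (iota : X -> nat) :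
  injective iota -> forall p, exists S, decode_task iota S = p.
Proof.
move=> iota_inj [h | B].
- pose S := [set k | exists x, k = (pickle (iota x, h x)).+1]; exists S.
  rewrite /decode_task asboolF => [|[x //]]; congr inl; apply: funext => x.
  have hx : exists z : nat + nat, S (pickle (iota x, z)).+1 by exists (h x), x.
  have [x' /eqP] := choose_orP (inl 0) hx.
  by rewrite eqSS => /eqP /(pcan_inj pickleK) [/iota_inj -> ->].
- exists (0 |` [set n.+1 | n in B]).
  rewrite /decode_task asboolT; last by left.
  by congr inr; apply/seteqP; split=> n; [case=> // -[m Bm [<-]] | right; exists n].
Qed.

Section Construction.
Variables (X Y : Type) (I : set (set X)) (J : set (set Y)).
Variables (iota : X -> nat) (e : Y -> nat) (g : nat -> Y).
Hypotheses (hI : is_ideal I) (hJ : is_ideal J) (unb : unboring I).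
Hypothesis not_katetov : forall A, ~ I A -> ~ katetov_le_restr J I A.
Hypotheses (iota_inj : injective iota) (eK : cancel e g).
Variables (T : Type) (lt : T -> T -> Prop) (task : T -> (X -> nat + nat) + set nat).
Hypotheses (lt_wf : well_founded lt) (lt_total : forall q r, [\/ q = r, lt q r | lt r q]).
Hypothesis lt_countable : forall q, countable [set r | lt r q].
Hypothesis task_surj : forall p, exists q, task q = p.

Definition fresh_subset (c : nat -> set nat) (B C : set nat) :=
  [/\ forall k, finite_set (B `&` c k), C `<=` B, infinite_set C & J (e @^-1` C)].

Definition seg_code q : T -> nat :=
  choose_or (fun _ => 0) (fun f => forall r r', lt r q -> lt r' q -> f r = f r' -> r = r').

Definition enum_earlier q (rec : forall r, lt r q -> set nat) (n : nat) : set nat :=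
  choose_or set0 (fun C => exists r (hr : lt r q), seg_code q r = n /\ C = rec r hr).

Definition step q (rec : forall r, lt r q -> set nat) : set nat :=
  match task q with
  | inl h => img_inl h (choose_or set0 (fresh I J e (enum_earlier rec) h))
  | inr B => choose_or set0 (fresh_subset (enum_earlier rec) B)
  end.

Definition stage : T -> set nat := Fix lt_wf (fun _ => set nat) step.

Definition earlier q : nat -> set nat := enum_earlier (fun r (_ : lt r q) => stage r).

Definition stage_spec q (C : set nat) :=
  match task q with
  | inl h => exists2 A, fresh I J e (earlier q) h A & C = img_inl h A
  | inr B => fresh_subset (earlier q) B C
  end.

Lemma stageE q : stage q =
  match task q with
  | inl h => img_inl h (choose_or set0 (fresh I J e (earlier q) h))
  | inr B => choose_or set0 (fresh_subset (earlier q) B)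
  end.
Proof.
rewrite /stage Fix_eq // => q' f f' ff'.
have -> // : f = f'.
by apply: functional_extensionality_dep => r; apply: functional_extensionality_dep.
Qed.

Lemma stage_specP q : (exists C, stage_spec q C) -> stage_spec q (stage q).
Proof.
rewrite /stage_spec stageE; case: (task q) => [h [_ [A fA _]] | B ex].
  by exists (choose_or set0 (fresh I J e (earlier q) h)) => //; apply: choose_orP; exists A.
exact: choose_orP ex.
Qed.

Lemma stage_spec_or_set0 q : stage_spec q (stage q) \/ stage q = set0.
Proof.
rewrite /stage_spec stageE; case: (task q) => [h | B].
  case: (choose_or_cases set0 (fresh I J e (earlier q) h)) => [fA | ->].
    by left; exact: ex_intro2 fA erefl.
  by right; apply/seteqP; split=> // m [x].
exact: choose_or_cases.
Qed.

Lemma seg_code_inj q r r' : lt r q -> lt r' q -> seg_code q r = seg_code q r' -> r = r'.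
Proof.
have /countable_injP[f f_inj] := lt_countable q.
move: r r'; apply: (choose_orP (fun _ => 0)
  (P := fun f => forall r r', lt r q -> lt r' q -> f r = f r' -> r = r')).
by exists f => r r' hr hr' /f_inj; apply; rewrite inE.
Qed.

Lemma earlierP q n : earlier q n = set0 \/ exists2 r, lt r q & earlier q n = stage r.
Proof.
rewrite /earlier /enum_earlier.
case: (choose_or_cases set0
  (fun C => exists r (_ : lt r q), seg_code q r = n /\ C = stage r)) => [|->]; last by left.
by move=> [r [hr [_ ->]]]; right; exists r.
Qed.

Lemma earlier_surj q r : lt r q -> exists n, earlier q n = stage r.
Proof.
move=> hr; exists (seg_code q r); rewrite /earlier /enum_earlier.
have ex : exists C, exists r' (hr' : lt r' q), seg_code q r' = seg_code q r /\ C = stage r'.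
  by exists (stage r), r, hr.
by have [r' [hr' [/(seg_code_inj hr' hr) -> ->]]] := choose_orP set0 ex.
Qed.

Lemma stage_spec_props q C : stage_spec q C ->
  [/\ infinite_set C, J (e @^-1` C) & forall n, finite_set (C `&` earlier q n)].
Proof.
rewrite /stage_spec; case: (task q) => [h [A fresh_A ->] | B [disj CB iC JC]].
  by have [_ _ _ JA disjA] := fresh_A; split=> //; exact: fresh_img_infinite hI fresh_A.
split=> // n; apply: sub_finite_set (disj n) => m [Cm ?].
by split=> //; apply: CB.
Qed.

Definition stages : set (set nat) := [set C | exists2 q, C = stage q & C !=set0].

Lemma stage_spec_nonempty q : stage q !=set0 -> stage_spec q (stage q).
Proof. by case: (stage_spec_or_set0 q) => // -> []. Qed.

Lemma stages_spec C : stages C -> exists2 q, C = stage q & stage_spec q C.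
Proof. by move=> [q -> /stage_spec_nonempty]; exists q. Qed.

Lemma stages_small C : stages C -> J (e @^-1` C).
Proof. by move=> /stages_spec[q _ /stage_spec_props[]]. Qed.

Lemma stages_infinite C : stages C -> infinite_set C.
Proof. by move=> /stages_spec[q _ /stage_spec_props[]]. Qed.

Lemma earlier_stages q n : earlier q n !=set0 -> stages (earlier q n).
Proof. by case: (earlierP q n) => [-> [] //| [r _ ->] ne]; exists r. Qed.

Lemma stages_almost_disjoint C C' : stages C -> stages C' -> C <> C' ->
  finite_set (C `&` C').
Proof.
have later q r : lt r q -> stage q !=set0 -> finite_set (stage q `&` stage r).
  move=> hr /stage_spec_nonempty /stage_spec_props[_ _ disj].
  by have [n <-] := earlier_surj hr.
move=> [q -> ne] [q' -> ne'] neq.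
case: (lt_total q q') => [eqq | lt_qq' | lt_q'q]; first by rewrite eqq in neq.
  by rewrite setIC; apply: later.
exact: later.
Qed.

Lemma stages_meets B : ~ J (e @^-1` B) -> exists2 C, stages C & infinite_set (B `&` C).
Proof.
move=> nJB; have [q tq] := task_surj (inr B).
case: (pselect (exists n, infinite_set (B `&` earlier q n))) => [[n iBn] | /forallNP fin].
  exists (earlier q n) => //; apply: earlier_stages.
  by have [m [_ ?]] := infinite_setN0 iBn; exists m.
have [Z ZB [iZ JZ]] := infinite_small_subset hI hJ iota_inj eK
  (not_katetov (ideal_setT hI)) nJB.
have : stage_spec q (stage q).
  apply: stage_specP; exists (e @` Z); rewrite /stage_spec tq; split.
  - by move=> k; apply: contrapT; apply: fin.
  - by move=> m [y /ZB By <-].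
  - exact: infinite_image_inj (can_inj eK) iZ.
  - by apply: (idealS hJ _ JZ) => y [y' Zy' /(can_inj eK) <-].
rewrite /stage_spec tq => -[_ SB iS _].
exists (stage q); last by rewrite setIidr.
by exists q => //; exact: infinite_setN0 iS.
Qed.

Lemma stages_infinite_set : infinite_set stages.
Proof.
move=> fin; pose U := \bigcup_(C in stages) C.
have JU : J (e @^-1` U).
  have : J (\bigcup_(C in stages) e @^-1` C).
    by apply: (ideal_bigcup hJ) => // C; exact: stages_small.
  by apply: (idealS hJ) => y [C FC Cy]; exists C.
have nJ : ~ J (e @^-1` (~` U)).
  move=> JnU; apply: (ideal_setT hJ).
  apply: (ideal_subU hJ (B := e @^-1` U) (C := e @^-1` ~` U)) => // y _.
  by case: (pselect (U (e y))); [left | right].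
have [C FC] := stages_meets nJ; apply.
by apply: sub_finite_set (finite_set0 nat) => m [nUm Cm]; apply: nUm; exists C.
Qed.

Lemma AD_family_stages : AD_family stages.
Proof.
split; [exact: stages_infinite_set | exact: stages_infinite | exact: stages_almost_disjoint].
Qed.

Lemma stages_FinBW : FinBW I (@mopen stages).
Proof.
split; first exact: mrowka_hausdorff AD_family_stages.
move=> x; pose h := seq_code iota x.
have [q tq] := task_surj (inl h).
have [[z nIz] | [k [A [nIA fA hA]]] | [A fresh_A] | [A [nIA fA hA]]] :=
  unboring_dichotomy (earlier q) h hI hJ iota_inj eK not_katetov unb.
- have [n0 hn0] := ideal_positive_nonempty hI nIz.
  exists [set n | h n = z]; split=> //; exists (x n0).
  by apply: conv_const => n hn; apply: (seq_code_inj iota_inj); rewrite -/h hn hn0.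
- have [n0 An0] := ideal_positive_nonempty hI nIA; have [m0 _ km0] := hA n0 An0.
  have FC := earlier_stages (ex_intro _ m0 km0).
  by exists A; split=> //; exists (MA FC); exact: (conv_ad_code fA hA).
- have : stage_spec q (stage q).
    by apply: stage_specP; exists (img_inl h A); rewrite /stage_spec tq; exists A.
  rewrite /stage_spec tq => -[A' fresh_A' eS]; have [nIA' A'_inl fA' _ _] := fresh_A'.
  have FS : stages (stage q).
    by exists q => //; rewrite eS; exact/infinite_setN0/(fresh_img_infinite hI fresh_A').
  exists A'; split=> //; exists (MA FS); apply: (conv_ad_code (iota := iota)) => // n An.
  by have [m hm] := A'_inl n An; exists m => //; rewrite eS; exists n.
- by exists A; split=> //; exists MInf; exact: (conv_inf_code fA hA).
Qed.

Lemma stages_not_FinBW : ~ FinBW J (@mopen stages).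
Proof.
move=> [_ /(_ (fun y => MN (e y)))[A [nJA [p conv]]]].
case: p conv => [n | C hC |] conv.
- by apply: nJA; apply: (ideal_finite hJ); exact: conv_point_finite (can_inj eK) conv.
- apply: nJA; apply: (ideal_subU hJ (B := [set y | A y /\ ~ C (e y)]) (C := e @^-1` C)).
  + by move=> y Ay; case: (pselect (C (e y))); [right | left].
  + exact: (ideal_finite hJ (conv_ad_almost conv)).
  + exact: stages_small.
- have nJB : ~ J (e @^-1` (e @` A)).
    by apply: contra_not nJA; apply: (idealS hJ) => y Ay; exists y.
  have [C FC iAC] := stages_meets nJB; apply: iAC.
  have := finite_image e (conv_inf_almost_disjoint AD_family_stages FC conv).
  by apply: sub_finite_set => m [[y Ay <-] Cy]; exists y.
Qed.

Lemma stages_separate :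
  AD_family stages /\ FinBW I (@mopen stages) /\ ~ FinBW J (@mopen stages).
Proof.
split; first exact: AD_family_stages.
by split; [exact: stages_FinBW | exact: stages_not_FinBW].
Qed.

End Construction.

Unset Implicit Arguments.

Theorem theorem9p1 (X Y : Type) (I : set (set X)) (J : set (set Y)) :
  CH ->
  countable [set: X] -> infinite_set [set: X] ->
  countable [set: Y] -> infinite_set [set: Y] ->
  is_ideal I -> is_ideal J ->
  unboring I ->
  (forall A : set X, ~ I A -> ~ katetov_le_restr J I A) ->
  exists AD : set (set nat),
    AD_family AD /\ FinBW I (@mopen AD) /\ ~ FinBW J (@mopen AD).
Proof.
move=> ch cX _ cY _ hI hJ unb not_katetov.
have [iota iota_inj] := countable_setT_inj cX.
have [e e_inj] := countable_setT_inj cY.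
have [y0 _] := ideal_positive_nonempty hJ (ideal_setT hJ).
have [g eK] := cancel_of_injective y0 e_inj.
have [T [lt [task [lt_wf lt_total lt_countable task_surj]]]] :=
  CH_index ch (decode_task_surj iota_inj).
exists (stages I J e task lt_wf).
exact: (stages_separate hI hJ unb not_katetov iota_inj eK lt_wf
         lt_total lt_countable task_surj).
Qed.
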